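(* Let $\mathcal I$ be an instance of $\mathrm{CSP}(\Gamma_0)$ on variables $u_1,\dots,u_n$, whose constraints are of the forms $(u_i=u_j\vee u_k=0)$, $(u_i=u_j\vee u_k=1)$, $u_i=1$, $u_i=0$ (interpreted over $\{0,1\}$). Let $\mathcal J$ be the instance on the $3n+3$ variables $x,x',y',x_1,\dots,x_n,y_1,\dots,y_n,z_1,\dots,z_n$ over the domain $\{0,1,2\}$ consisting of the following constraints (all indices range over $[n]=\{1,\dots,n\}$): $\mathcal C_1$: $N(x,x_i,y_i)$ for all $i$; $\mathcal C_2$: $N(x',z_i,y_i)$ for all $i$; $\mathcal C_3$: $N(y',z_i,x_i)$ for all $i$; $\mathcal C_4$: $N(t_1,t_2,t_3)$ for all $t_1,t_2,t_3\in\{x,x',x_1,\dots,x_n\}$; $\mathcal C_5$: $N(t_1,t_2,t_3)$ for all $t_1,t_2,t_3\in\{x,y',y_1,\dots,y_n\}$; $\mathcal C_6$: $N(t_1,t_2,t_3)$ for all $t_1,t_2,t_3\in\{x',y',z_1,\dots,z_n\}$; $\mathcal C_7$: $N(x_i,y_j,z_i)$ for all $i,j$; $\mathcal C_8$: $N(x_i,y_j,z_j)$ for all $i,j$; $\mathcal C_9$: $N(x,x_i,z_i)$ for all $i$; $\mathcal C_{10}$: $N(x,y_i,z_i)$ for all $i$; $\mathcal C_{11}$: $N(x_i,x_j,y_k)$ for each constraint $(u_i=u_j\vee u_k=0)$ of $\mathcal I$; $\mathcal C_{12}$: $N(y_i,y_j,x_k)$ for each constraint $(u_i=u_j\vee u_k=1)$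 of $\mathcal I$; $\mathcal C_{13}$: $x=x_i$ for each constraint $u_i=1$ of $\mathcal I$; $\mathcal C_{14}$: $x=y_i$ for each constraint $u_i=0$ of $\mathcal I$. Then $\mathcal I$ has a solution if and only if $\mathcal J$ has a surjective solution, i.e. an assignment of values in $\{0,1,2\}$ to all $3n+3$ variables satisfying all constraints of $\mathcal J$ and taking every value $0,1,2$.
   Context: $N=\{(a,b,c)\in\{0,1,2\}^{3}\mid \{a,b,c\}\neq\{0,1,2\}\}$, i.e. $N(a,b,c)$ holds iff $a,b,c$ are not pairwise distinct. $\Gamma_0$ is the constraint language on $\{0,1\}$ consisting of the relations $\{(x,y,z)\mid x=y\text{ or }z=0\}$, $\{(x,y,z)\mid x=y\text{ or }z=1\}$, $\{0\}$, $\{1\}$. A solution of $\mathcal I$ is an assignment $u_1,\dots,u_n\in\{0,1\}$ satisfying all its constraints. *)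

From mathcomp Require Import all_boot.
From Stdlib Require List.
Set Implicit Arguments. Unset Strict Implicit. Unset Printing Implicit Defensive.

Definition N3 (a b c : 'I_3) : bool := ~~ [&& a != b, b != c & a != c].

(* Constraints of an instance of CSP(Gamma_0) on variables u_0..u_{n-1}
   (0-indexed version of u_1..u_n). *)
Inductive g0cons (n : nat) : Type :=
| EqOr0 of 'I_n & 'I_n & 'I_n
| EqOr1 of 'I_n & 'I_n & 'I_n
| Is1 of 'I_n
| Is0 of 'I_n.

Definition g0inst (n : nat) := seq (g0cons n).

Definition g0sat n (u : 'I_n -> 'I_2) (c : g0cons n) : Prop :=
  match c with
  | EqOr0 i j k => u i = u j \/ nat_of_ord (u k) = 0
  | EqOr1 i j k => u i = u j \/ nat_of_ord (u k) = 1
  | Is1 i => nat_of_ord (u i) = 1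
  | Is0 i => nat_of_ord (u i) = 0
  end.

Definition g0solution n (I : g0inst n) (u : 'I_n -> 'I_2) : Prop :=
  forall c, List.In c I -> g0sat u c.

Definition allN3 (s : seq 'I_3) : Prop :=
  forall a b c, a \in s -> b \in s -> c \in s -> N3 a b c.

Definition Jcons n (x : 'I_3) (X Y : 'I_n -> 'I_3) (c : g0cons n) : Prop :=
  match c with
  | EqOr0 i j k => N3 (X i) (X j) (Y k)
  | EqOr1 i j k => N3 (Y i) (Y j) (X k)
  | Is1 i => x = X i
  | Is0 i => x = Y i
  end.

Definition Jsolution n (I : g0inst n) (x x' y' : 'I_3) (X Y Z : 'I_n -> 'I_3)
  : Prop :=
  (forall i, N3 x (X i) (Y i)) /\
      (forall i, N3 x' (Z i) (Y i)) /\
      (forall i, N3 y' (Z i) (X i)) /\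
      allN3 [:: x, x' & [seq X i | i : 'I_n]] /\
      allN3 [:: x, y' & [seq Y i | i : 'I_n]] /\
      allN3 [:: x', y' & [seq Z i | i : 'I_n]] /\
      (forall i j, N3 (X i) (Y j) (Z i)) /\
      (forall i j, N3 (X i) (Y j) (Z j)) /\
      (forall i, N3 x (X i) (Z i)) /\
      (forall i, N3 x (Y i) (Z i)) /\
    (forall c, List.In c I -> Jcons x X Y c).

Definition Jsurjective n (x x' y' : 'I_3) (X Y Z : 'I_n -> 'I_3) : Prop :=
  forall v : 'I_3,
    v = x \/ v = x' \/ v = y' \/
    (exists i, v = X i) \/ (exists i, v = Y i) \/ (exists i, v = Z i).

From mathcomp Require Import all_boot.
Set Implicit Arguments. Unset Strict Implicit. Unset Printing Implicit Defensive.

(* A solution u of I is encoded by (x, x', y') = (0, 1, 2) and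
   (x_i, y_i, z_i) = (x, y', y') if u_i = 1, (x', x, x') if u_i = 0.
   Conversely, the constraints C1-C10 restricted to three columns
   (x_i, y_i, z_i), one witnessing each value, already force x, x', y' to be
   pairwise distinct; this is a finite check.  Then C4-C6 confine x_i, y_i,
   z_i to {x, x'}, {x, y'}, {x', y'}, exactly one of x_i = x and y_i = x
   holds, and u_i := [x_i = x] satisfies I by C11-C14. *)

(* An explicit enumeration of 'I_3: ord_enum does not reduce under
   vm_compute, as insub goes through the opaque idP. *)
Definition ord_mid : 'I_3 := Ordinal (isT : 1 < 3).

Definition ord3s : seq 'I_3 := [:: ord0; ord_mid; ord_max].

Lemma mem_ord3s (a : 'I_3) : a \in ord3s.
Proof. by case: a => -[|[|[|]]]. Qed.

(* Sealed from simpl so that instantiating the quantifiers of a checked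
   formula does not unfold the remaining ones. *)
Definition all3 (P : pred 'I_3) : bool := all P ord3s.
Arguments all3 : simpl never.

Notation "'all3' a , P" := (all3 (fun a : 'I_3 => P))
  (at level 200, a name, format "'all3'  a ,  P").

Lemma all3P (P : pred 'I_3) : reflect (forall a, P a) (all3 a, P a).
Proof.
by apply: (iffP allP) => [H a | H a _]; [apply: H; apply: mem_ord3s | apply: H].
Qed.

Definition rainbow (a b c : 'I_3) : bool := [&& a != b, b != c & a != c].

Lemma N3E a b c : N3 a b c = ~~ rainbow a b c.
Proof. by []. Qed.

Lemma N3_of_eq a b c : [|| a == b, b == c | a == c] -> N3 a b c.
Proof. by rewrite /N3 !negb_and !negbK. Qed.

Lemma N3C a b c : N3 a b c = N3 b a c.
Proof. by rewrite /N3 (eq_sym b a) (andbC (b != c)). Qed.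

Lemma N3CA a b c : N3 a b c = N3 b c a.
Proof. by rewrite /N3 (eq_sym c a) (eq_sym b a) andbC -andbA. Qed.

Lemma rainbowC23 a b c : rainbow a b c = rainbow a c b.
Proof. by rewrite /rainbow (eq_sym c b) andbC -andbA andbCA. Qed.

Lemma N3_two x p a : x != p -> N3 x p a -> (a == x) || (a == p).
Proof. by rewrite /N3 => ->; rewrite !negb_and !negbK /= orbC !(eq_sym a). Qed.

Lemma allN3_sub s t : {subset t <= s} -> allN3 s -> allN3 t.
Proof. by move=> ts Hs a b c /ts ha /ts hb /ts hc; apply: Hs. Qed.

Lemma allN3_two p q s : {subset s <= [:: p; q]} -> allN3 s.
Proof.
move=> sub a b c /sub ha /sub hb /sub hc; apply: N3_of_eq.
by move: ha hb hc; rewrite !inE => /orP[]/eqP-> /orP[]/eqP-> /orP[]/eqP->; rewrite !eqxx ?orbT.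
Qed.

Definition misses_value (s : seq 'I_3) : bool := ~~ all3 v, v \in s.

Lemma allN3_misses_value s : allN3 s -> misses_value s.
Proof.
move=> Hs; apply/negP => /all3P full.
by have := Hs _ _ _ (full ord0) (full ord_mid) (full ord_max).
Qed.

Definition column_ok (x x' y' a b c : 'I_3) : bool :=
  [&& N3 x a b, N3 x' c b, N3 y' c a, N3 x a c, N3 x b c, N3 a b c,
      N3 x x' a, N3 x y' b & N3 x' y' c].

Definition cross_ok (a b c a' b' c' : 'I_3) : bool := N3 a b' c && N3 a b' c'.

(* The [if]s prune the search: vm_compute evaluates both arguments of
   [==>] and [&&] eagerly. *)
Fact three_columns_check :
  all3 x, all3 x', all3 y', all3 a0, all3 b0, all3 c0,
  if column_ok x x' y' a0 b0 c0 then
  all3 a1, all3 b1, all3 c1,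
  if [&& column_ok x x' y' a1 b1 c1, cross_ok a0 b0 c0 a1 b1 c1
       & cross_ok a1 b1 c1 a0 b0 c0] then
  all3 a2, all3 b2, all3 c2,
  if [&& column_ok x x' y' a2 b2 c2, cross_ok a0 b0 c0 a2 b2 c2,
       cross_ok a2 b2 c2 a0 b0 c0, cross_ok a1 b1 c1 a2 b2 c2
       & cross_ok a2 b2 c2 a1 b1 c1] then
    [&& misses_value [:: x; x'; a0; a1; a2], misses_value [:: x; y'; b0; b1; b2],
        misses_value [:: x'; y'; c0; c1; c2]
      & all3 v, v \in [:: x; x'; y'; a0; b0; c0; a1; b1; c1; a2; b2; c2]]
    ==> rainbow x x' y'
  else true else true else true.
Proof. by vm_compute. Qed.

Lemma JsurjectiveP n x x' y' (X Y Z : 'I_n -> 'I_3) :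
  Jsurjective x x' y' X Y Z <->
  forall v, v \in [:: x; x'; y'] \/ exists i, v \in [:: X i; Y i; Z i].
Proof.
split=> surj v.
  case: (surj v) => [->|[->|[->|[[i ->]|[[i ->]|[i ->]]]]]];
    by [left; rewrite !inE eqxx ?orbT | right; exists i; rewrite !inE eqxx ?orbT].
case: (surj v) => [|[i]]; rewrite !inE => /or3P[]/eqP->.
- by left.
- by right; left.
- by do 2 right; left.
- by do 3 right; left; exists i.
- by do 4 right; left; exists i.
- by do 5 right; exists i.
Qed.

Lemma Jsolution_range n (I : g0inst n) x x' y' X Y Z i :
  Jsolution I x x' y' X Y Z -> [/\ N3 x x' (X i), N3 x y' (Y i) & N3 x' y' (Z i)].
Proof.
case=> [_ [_ [_ [C4 [C5 [C6 _]]]]]].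
by split; [apply: C4 | apply: C5 | apply: C6]; rewrite !inE ?eqxx ?codom_f ?orbT.
Qed.

Lemma Jsolution_column n (I : g0inst n) x x' y' X Y Z i :
  Jsolution I x x' y' X Y Z -> column_ok x x' y' (X i) (Y i) (Z i).
Proof.
move=> sol; have [Nx Ny Nz] := Jsolution_range i sol.
case: sol => [C1 [C2 [C3 [_ [_ [_ [C7 [_ [C9 [C10 _]]]]]]]]]].
by rewrite /column_ok C1 C2 C3 C9 C10 C7 Nx Ny Nz.
Qed.

Lemma Jsolution3_rainbow x x' y' (X Y Z : 'I_3 -> 'I_3) :
  Jsolution ([::] : g0inst 3) x x' y' X Y Z -> Jsurjective x x' y' X Y Z ->
  rainbow x x' y'.
Proof.
move=> sol /JsurjectiveP surj; have col i := Jsolution_column i sol.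
case: sol => [_ [_ [_ [C4 [C5 [C6 [C7 [C8 _]]]]]]]].
have cross i j : cross_ok (X i) (Y i) (Z i) (X j) (Y j) (Z j) by rewrite /cross_ok C7 C8.
have mis (F : 'I_3 -> 'I_3) p q : allN3 [:: p, q & codom F] ->
    misses_value [:: p; q; F ord0; F ord_mid; F ord_max].
  move=> /allN3_sub sub; apply/allN3_misses_value/sub => v.
  by rewrite !inE => /or3P[->|->|/or3P[]/eqP->]; rewrite ?orbT ?codom_f ?orbT.
have cover : all3 v, v \in [:: x; x'; y'; X ord0; Y ord0; Z ord0; X ord_mid; Y ord_mid; Z ord_mid;
                                X ord_max; Y ord_max; Z ord_max].
  apply/all3P => v; case: (surj v) => [|[i]]; rewrite !inE.
    by case/or3P=> ->; rewrite ?orbT.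
  by move: (mem_ord3s i); rewrite !inE => /or3P[]/eqP-> /or3P[]->; rewrite ?orbT.
move: three_columns_check => /all3P/(_ x)/all3P/(_ x')/all3P/(_ y').
move=> /all3P/(_ (X ord0))/all3P/(_ (Y ord0))/all3P/(_ (Z ord0)); rewrite col /=.
move=> /all3P/(_ (X ord_mid))/all3P/(_ (Y ord_mid))/all3P/(_ (Z ord_mid)); rewrite col !cross /=.
move=> /all3P/(_ (X ord_max))/all3P/(_ (Y ord_max))/all3P/(_ (Z ord_max)).
by rewrite col !cross /= mis // mis // mis // cover.
Qed.

Lemma Jsolution_comp m n (I : g0inst n) x x' y' X Y Z (w : 'I_m -> 'I_n) :
  Jsolution I x x' y' X Y Z ->
  Jsolution ([::] : g0inst m) x x' y' (X \o w) (Y \o w) (Z \o w).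
Proof.
case=> [C1 [C2 [C3 [C4 [C5 [C6 [C7 [C8 [C9 [C10 _]]]]]]]]]].
have sub (F : 'I_n -> 'I_3) p q : {subset [:: p, q & codom (F \o w)] <= [:: p, q & codom F]}.
  by move=> v; rewrite !inE => /or3P[->|->|/codomP[i ->]]; rewrite /= ?codom_f ?orbT.
split; first by move=> i; apply: C1.
split; first by move=> i; apply: C2.
split; first by move=> i; apply: C3.
split; first exact: allN3_sub (sub _ _ _) C4.
split; first exact: allN3_sub (sub _ _ _) C5.
split; first exact: allN3_sub (sub _ _ _) C6.
split; first by move=> i j; apply: C7.
split; first by move=> i j; apply: C8.
split; first by move=> i; apply: C9.
by split=> [i|c []]; apply: C10.
Qed.

Lemma Jsurjective_witnesses n x x' y' (X Y Z : 'I_n -> 'I_3) :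
  'I_n -> Jsurjective x x' y' X Y Z ->
  exists w : 'I_3 -> 'I_n, Jsurjective x x' y' (X \o w) (Y \o w) (Z \o w).
Proof.
move=> i0 /JsurjectiveP surj.
exists (fun v => odflt i0 [pick i | v \in [:: X i; Y i; Z i]]).
apply/JsurjectiveP => v; case: (surj v) => [|[i vi]]; [by left | right; exists v].
by rewrite /=; case: pickP => [j|/(_ i)]; rewrite ?vi.
Qed.

Lemma Jsolution_rainbow n (I : g0inst n) x x' y' X Y Z :
  Jsolution I x x' y' X Y Z -> Jsurjective x x' y' X Y Z -> 'I_n -> rainbow x x' y'.
Proof.
move=> sol surj i0; have [w surjw] := Jsurjective_witnesses i0 surj.
exact: Jsolution3_rainbow (Jsolution_comp w sol) surjw.
Qed.

Lemma column_dichotomy x x' y' a b c :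
  rainbow x x' y' -> column_ok x x' y' a b c -> (a == x) = (b != x).
Proof.
move=> rxyz; have /and3P[xx' x'y' xy'] := rxyz.
have Nxyz : N3 x x' y' = false by rewrite N3E rxyz.
case/and4P=> Nxab Nx'cb Ny'ca /and4P[_ _ _ /and3P[Na Nb Nc]].
case/orP: (N3_two xx' Na) => /eqP ea; case/orP: (N3_two xy' Nb) => /eqP eb; subst a b.
- case/orP: (N3_two x'y' Nc) => /eqP ec; subst c.
  + by rewrite N3C -N3CA Nxyz in Ny'ca.
  + by rewrite -N3CA Nxyz in Nx'cb.
- by rewrite eqxx eq_sym xy'.
- by rewrite eq_sym (negbTE xx') eqxx.
- by rewrite Nxyz in Nxab.
Qed.

Lemma N3_agree x p q a b c :
  rainbow x p q -> N3 x p a -> N3 x p b -> N3 x q c -> N3 a b c -> c != x ->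
  (a == x) = (b == x).
Proof.
move=> rxpq; have /and3P[xp _ xq] := rxpq; have Nxpq : N3 x p q = false by rewrite N3E rxpq.
move=> Na Nb Nc Nabc cx; case/orP: (N3_two xq Nc) => /eqP ec; first by rewrite ec eqxx in cx.
case/orP: (N3_two xp Na) => /eqP ea; case/orP: (N3_two xp Nb) => /eqP eb; subst a b c => //.
- by rewrite Nxpq in Nabc.
- by rewrite N3C Nxpq in Nabc.
Qed.

Lemma g0solution_of_Jsolution n (I : g0inst n) x x' y' X Y Z :
  Jsolution I x x' y' X Y Z -> Jsurjective x x' y' X Y Z ->
  g0solution I (fun i => if X i == x then ord_max else ord0).
Proof.
move=> sol surj c cI; have rxyz := Jsolution_rainbow sol surj.
have dich i : (X i == x) = (Y i != x) := column_dichotomy (rxyz i) (Jsolution_column i sol).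
have range i := Jsolution_range i sol.
case: sol => [_ [_ [_ [_ [_ [_ [_ [_ [_ [_ Jc]]]]]]]]]].
move: (Jc c cI); case: c {cI} => [i j k|i j k|i|i] /= N.
- have [Ykx|Ykx] := eqVneq (Y k) x; first by right; rewrite dich Ykx eqxx.
  have [Nxi _ _] := range i; have [Nxj _ _] := range j; have [_ Nyk _] := range k.
  by left; rewrite (N3_agree (rxyz i) Nxi Nxj Nyk N Ykx).
- have [Xkx|Xkx] := eqVneq (X k) x; first by right.
  have [_ Nyi _] := range i; have [_ Nyj _] := range j; have [Nxk _ _] := range k.
  rewrite rainbowC23 in rxyz.
  by left; rewrite !dich (N3_agree (rxyz i) Nyi Nyj Nxk N Xkx).
- by rewrite -N eqxx.
- by rewrite dich -N eqxx.
Qed.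

Lemma Jsolution_of_g0solution n (I : g0inst n) (u : 'I_n -> 'I_2) :
  g0solution I u ->
  exists X Y Z, Jsolution I ord0 ord_mid ord_max X Y Z /\ Jsurjective ord0 ord_mid ord_max X Y Z.
Proof.
move=> sol; pose b i := (u i : nat) == 1.
exists (fun i => if b i then ord0 else ord_mid), (fun i => if b i then ord_max else ord0),
  (fun i => if b i then ord_max else ord_mid).
split; last by apply/JsurjectiveP => v; left; apply: mem_ord3s.
have two (F : 'I_n -> 'I_3) p q : (forall i, F i \in [:: p; q]) -> allN3 [:: p, q & codom F].
  move=> Fpq; apply: (@allN3_two p q) => v.
  rewrite !inE => /or3P[/eqP->|/eqP->|/codomP[i ->]]; rewrite ?eqxx ?orbT //.
  by move: (Fpq i); rewrite !inE.
do 3 (split; first by move=> i; case: (b i)).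
do 3 (split; first by apply: two => i; case: (b i)).
do 2 (split; first by move=> i j; case: (b i); case: (b j)).
do 2 (split; first by move=> i; case: (b i)).
move=> c /sol; case: c => [i j k|i j k|i|i] /=.
- case=> [eij|ek]; first by rewrite /b eij N3_of_eq ?eqxx.
  have -> : b k = false by rewrite /b ek.
  by case: (b i); case: (b j).
- case=> [eij|ek]; first by rewrite /b eij N3_of_eq ?eqxx.
  have -> : b k = true by rewrite /b ek.
  by case: (b i); case: (b j).
- by rewrite /b => ->.
- by rewrite /b => ->.
Qed.

Theorem lemma3p2 (n : nat) (I : g0inst n) :
  (exists u : 'I_n -> 'I_2, g0solution I u) <->
  (exists (x x' y' : 'I_3) (X Y Z : 'I_n -> 'I_3),
      Jsolution I x x' y' X Y Z /\ Jsurjective x x' y' X Y Z).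
Proof.
split=> [[u /Jsolution_of_g0solution[X [Y [Z sol]]]] | [x [x' [y' [X [Y [Z [sol surj]]]]]]]].
  by exists ord0, ord_mid, ord_max, X, Y, Z.
by exists (fun i => if X i == x then ord_max else ord0); apply: g0solution_of_Jsolution surj.
Qed.
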